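(* For any extended string $h\in \mathcal{L}_e(M)$, let $\beta=\mathsf{tam}(h)$ and $(q,\tilde{q},z)=f(h)$. Then $\mathcal{E}_{S/G}^C(\beta)=\mathsf{UR}_{\Delta_H(z)}(q)$.
   Context: Let $G=(X,\Sigma,\delta,X_0)$ be a finite-state automaton (partial transition function $\delta$, set of initial states $X_0$), with $\Sigma=\Sigma_o\dot\cup\Sigma_{uo}=\Sigma_c\dot\cup\Sigma_{uc}$ (observable/unobservable, controllable/uncontrollable events), and natural projection $P:\Sigma^*\to\Sigma_o^*$. For a state $x$ of an automaton, $\Delta(x)$ denotes the set of events defined at $x$. A partial-observation supervisor $S:P(\mathcal{L}(G))\to\Gamma$ (with $\Gamma=\{\gamma\subseteq\Sigma:\Sigma_{uc}\subseteq\gamma\}$) is realized by a deterministic automaton $H=(Z,\Sigma,\xi,z_0)$ that changes state only on observable events and satisfies $\Delta_H(\xi(z_0,s))=S(P(s))$ for all $s\in\mathcal{L}(S/G)$, where $\mathcal{L}(S/G)$ is the closed-loop language (union over $x_0\in X_0$ of strings generated from $x_0$ with each event enabled by $S$ at the observation of the preceding prefix). For $q\subseteq X$, $\gamma\subseteq\Sigma$, $\sigma\in\Sigma_o$: $\mathsf{UR}_\gamma(q)=\{\delta(x,s):x\in q,s\in(\Sigma_{uo}\cap\gamma)^*\}$, $\mathsf{NX}_\sigma(q)=\{\delta(x,\sigma):x\in q\}$, $\mathsf{NX}_\epsilon(q)=q$, and $\mathcal{O}(q,\gamma)=\{\sigma\in\Sigma_o\cap\gamma:\exists x\in q,w\in(\Sigma_{uo}\cap\gamma)^*,\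 \delta(x,w\sigma)\text{ defined}\}$. The supervisor's current-state estimate after observation $\alpha\in P(\mathcal{L}(S/G))$ is $\mathcal{E}^C_{S/G}(\alpha)=\{\delta(x_0,s):x_0\in X_0,s\in\mathcal{L}(S/G,x_0),P(s)=\alpha\}$ (empty if $\alpha\notin P(\mathcal{L}(S/G))$). The augmented system $\tilde G$ has states $\tilde X\subseteq X_0\times X$, initial states $\tilde X_0=\{(x_0,x_0):x_0\in X_0\}$ and $\tilde\delta((x_0,x),\sigma)=(x_0,\delta(x,\sigma))$; $\widetilde{\mathsf{UR}},\widetilde{\mathsf{NX}}$ denote the same operators on $\tilde G$. A set $\Sigma_v\subseteq\Sigma_o$ of vulnerable events is given; for $\sigma\in\Sigma_o$, the attacker action set is $\mathcal{V}(\sigma)=\{\hat\sigma':\sigma'\in\Sigma_v\}\cup\{\hat\epsilon\}$ if $\sigma\in\Sigma_v$ and $\mathcal{V}(\sigma)=\{\hat\sigma\}$ otherwise (hatted events denote tampered observations). The All Attack Structure is $M=(Q,\Sigma_M,f,q_0)$ with $Q=Q_e\dot\cup Q_a$, environment states $Q_e\subseteq 2^X\times2^{\tilde X}\times(Z\cup\{z_{\mathsf{att}}\})$, attack states $Q_a\subseteq 2^X\times2^{\tilde X}\times Z\times\Sigma_o$, initial state $q_0=(X_0,\tilde X_0,z_0)$, events $\Sigma_M=\Sigma_o\cup\hat\Sigma_o^\epsilon$, and $\Delta_H(z_{\mathsf{att}})=\emptyset$. Transitions: from $q_e=(q,\tilde q,z)\in Q_e$, the enabled events are $\mathcal{O}(\tilde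 q,\Delta_H(z))$ if $z\in Z$ and none if $z=z_{\mathsf{att}}$, with $f(q_e,\sigma)=(q,\tilde q,z,\sigma)$; from $q_a=(q,\tilde q,z,\sigma)$, the enabled events are $\mathcal{V}(\sigma)$, and for $\hat\sigma_a\in\mathcal{V}(\sigma)$, $f(q_a,\hat\sigma_a)=(q',\tilde q',z')$ with $q'=\mathsf{NX}_{\sigma_a}(\mathsf{UR}_{\Delta_H(z)}(q))$, $\tilde q'=\widetilde{\mathsf{NX}}_{\sigma}(\widetilde{\mathsf{UR}}_{\Delta_H(z)}(\tilde q))$, and $z'=\xi(z,\sigma_a)$ if $q'\neq\emptyset$, $z'=z_{\mathsf{att}}$ if $q'=\emptyset$. $\mathcal{L}_e(M)$ is the set of strings of $M$ ending in an environment state; for $h=\sigma_1\hat\sigma_{a1}\cdots\sigma_n\hat\sigma_{an}\in\mathcal{L}_e(M)$, $\mathsf{tam}(h)=\sigma_{a1}\cdots\sigma_{an}$ (hats removed, $\hat\epsilon$ becoming $\epsilon$), i.e., the tampered observation received by the supervisor. *)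

From mathcomp Require Import all_boot.
Set Implicit Arguments. Unset Strict Implicit. Unset Printing Implicit Defensive.

Fixpoint dstar (T E : Type) (d : T -> E -> option T) (x : T) (s : seq E) : option T :=
  match s with
  | [::] => Some x
  | e :: s' => match d x e with Some y => dstar d y s' | None => None end
  end.

Section DES.
Variables (E : finType) (obs : {set E}).

Definition proj (s : seq E) : seq E := [seq e <- s | e \in obs].

Definition uo_in (gam : {set E}) (w : seq E) : bool :=
  all (fun e => (e \notin obs) && (e \in gam)) w.

Variables (T : Type) (delta : T -> E -> option T).

Definition UR (gam : {set E}) (q : T -> Prop) : T -> Prop :=
  fun y => exists x w, q x /\ uo_in gam w /\ dstar delta x w = Some y.

Definition NX (e : E) (q : T -> Prop) : T -> Prop :=
  fun y => exists x, q x /\ delta x e = Some y.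

(* NX_sigma_a with sigma_a = epsilon encoded as None *)
Definition NXo (o : option E) (q : T -> Prop) : T -> Prop :=
  match o with None => q | Some e => NX e q end.

Definition Obs (q : T -> Prop) (gam : {set E}) (e : E) : Prop :=
  e \in obs /\ e \in gam /\
  exists x w, q x /\ uo_in gam w /\ dstar delta x (rcons w e) <> None.
End DES.

(* augmented system: states (x0, x) *)
Definition deltat (X E : Type) (delta : X -> E -> option X) (p : X * X) (e : E)
  : option (X * X) := omap (fun y => (p.1, y)) (delta p.2 e).

Definition DeltaH (Z E : finType) (xi : Z -> E -> option Z) (z : Z) : {set E} :=
  [set e | xi z e != None].

(* Delta_H extended to Z \cup {z_att} (None = z_att), Delta_H(z_att) = empty *)
Definition DeltaHo (Z E : finType) (xi : Z -> E -> option Z) (zo : option Z) : {set E} :=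
  match zo with Some z => DeltaH xi z | None => set0 end.

Section ClosedLoop.
Variables (X E : finType) (obs : {set E}) (delta : X -> E -> option X) (X0 : {set X}).
Variable S : seq E -> {set E}.

Definition inLG (x0 : X) (s : seq E) : Prop := dstar delta x0 s <> None.

Definition inCL (x0 : X) (s : seq E) : Prop :=
  dstar delta x0 s <> None /\
  forall t e u, s = t ++ e :: u -> e \in S (proj obs t).

Definition Est (alpha : seq E) : X -> Prop :=
  fun y => exists x0 s, x0 \in X0 /\ inCL x0 s /\ proj obs s = alpha /\
                        dstar delta x0 s = Some y.
End ClosedLoop.

Inductive MState (X Z E : Type) :=
| Qe of (X -> Prop) & (X * X -> Prop) & option Z   (* None = z_att *)
| Qa of (X -> Prop) & (X * X -> Prop) & Z & E.

Inductive MEv (E : Type) :=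
| Env of E
| Att of option E.        (* hat sigma_a; Att None = hat epsilon *)

Arguments Qe {X Z E}. Arguments Qa {X Z E}. Arguments Env {E}. Arguments Att {E}.

Definition Vset (E : finType) (vuln : {set E}) (e : E) (o : option E) : Prop :=
  if e \in vuln then (match o with None => True | Some e' => is_true (e' \in vuln) end)
  else o = Some e.

Section AAS.
Variables (X E Z : finType) (obs vuln : {set E}) (delta : X -> E -> option X)
  (X0 : {set X}) (xi : Z -> E -> option Z) (z0 : Z).

Definition qnext (z : Z) (q : X -> Prop) (o : option E) : X -> Prop :=
  NXo delta o (UR obs delta (DeltaH xi z) q).
Definition qtnext (z : Z) (qt : X * X -> Prop) (e : E) : X * X -> Prop :=
  NX (deltat delta) e (UR obs (deltat delta) (DeltaH xi z) qt).

(* transition function f of M (partial: when z' = xi(z, sigma_a) is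
   undefined and q' is nonempty, no transition) *)
Inductive stepM : MState X Z E -> MEv E -> MState X Z E -> Prop :=
| stepM_env q qt z e :
    Obs obs (deltat delta) qt (DeltaH xi z) e ->
    stepM (Qe q qt (Some z)) (Env e) (Qa q qt z e)
| stepM_att_empty q qt z e o :
    Vset vuln e o -> ~ (exists x, qnext z q o x) ->
    stepM (Qa q qt z e) (Att o) (Qe (qnext z q o) (qtnext z qt e) None)
| stepM_att_eps q qt z e :
    Vset vuln e None -> (exists x, qnext z q None x) ->
    stepM (Qa q qt z e) (Att None) (Qe (qnext z q None) (qtnext z qt e) (Some z))
| stepM_att q qt z e ea z' :
    Vset vuln e (Some ea) -> (exists x, qnext z q (Some ea) x) ->
    xi z ea = Some z' ->
    stepM (Qa q qt z e) (Att (Some ea)) (Qe (qnext z q (Some ea)) (qtnext z qt e) (Some z')).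

Inductive runM : MState X Z E -> seq (MEv E) -> MState X Z E -> Prop :=
| runM_nil m : runM m [::] m
| runM_cons m a m' h m'' : stepM m a m' -> runM m' h m'' -> runM m (a :: h) m''.

Definition q0M : MState X Z E :=
  Qe (fun x => x \in X0) (fun p => p.1 \in X0 /\ p.2 = p.1) (Some z0).
End AAS.

Definition tam (E : Type) (h : seq (MEv E)) : seq E :=
  flatten [seq match a with Att (Some e) => [:: e] | _ => [::] end | a <- h].

(* The supervisor's estimate obeys the observer recursion
     E(eps) = UR_{S(eps)}(X0),
     E(beta sigma) = UR_{S(beta sigma)}(NX_sigma(E(beta)))  if sigma in S(beta), empty otherwise,
   and, since H realizes S, Delta_H(xi(z0, beta)) = S(beta) as soon as E(beta) is nonempty.
   Along a run h of M the supervisor component is xi(z0, tam h) and the estimate component q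
   is updated by exactly this recursion, applied to the tampered event; hence
   E(tam h) = UR_{Delta_H(z)}(q) is an invariant.  When the tampered observation leaves
   the closed-loop language, q' is empty and z_att, with Delta_H(z_att) empty, keeps both
   sides empty. *)

From mathcomp Require Import all_boot.
From Stdlib Require Import Setoid.
Set Implicit Arguments. Unset Strict Implicit. Unset Printing Implicit Defensive.

Lemma dstar_cat (T E : Type) (d : T -> E -> option T) x s1 s2 :
  dstar d x (s1 ++ s2) = if dstar d x s1 is Some y then dstar d y s2 else None.
Proof. by elim: s1 x => [|e s IH] x //=; case: (d x e). Qed.

Section Projection.
Variables (E : finType) (obs : {set E}).

Lemma proj_cat s1 s2 : proj obs (s1 ++ s2) = proj obs s1 ++ proj obs s2.
Proof. exact: filter_cat. Qed.

Lemma proj_rcons s e :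
  proj obs (rcons s e) = if e \in obs then rcons (proj obs s) e else proj obs s.
Proof. exact: filter_rcons. Qed.

Lemma proj_eq_nil s : (proj obs s == [::]) = all [predC obs] s.
Proof. by rewrite all_predC has_filter negbK. Qed.

Lemma uo_inE gam w : uo_in obs gam w = all [predC obs] w && all (mem gam) w.
Proof. by rewrite -all_predI. Qed.

Lemma proj_eq_rcons s b a :
  proj obs s = rcons b a ->
  exists s1 w, [/\ s = s1 ++ a :: w, proj obs s1 = b & all [predC obs] w].
Proof.
elim/last_ind: s b => [|s e IH] b; first by case: b.
rewrite proj_rcons; case: ifP => e_obs.
  move/eqP; rewrite eqseq_rcons => /andP[/eqP <- /eqP ->].
  by exists s, [::]; rewrite cats1.
case/IH=> s1 [w [-> <- w_uo]]; exists s1, (rcons w e).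
by rewrite rcons_cat all_rcons /= e_obs.
Qed.

End Projection.

Section Enabling.
Variables (E : finType) (obs : {set E}) (S : seq E -> {set E}).

Fixpoint enabledb (p s : seq E) : bool :=
  if s is e :: s' then (e \in S (proj obs p)) && enabledb (rcons p e) s' else true.

Lemma enabledbP p s :
  (forall t e u, s = t ++ e :: u -> e \in S (proj obs (p ++ t))) <-> enabledb p s.
Proof.
elim: s p => [|e s IH] p /=; first by split=> // _ [].
split=> [en_s | /andP[en_e /IH en_s] [|e1 t] e' u /=].
- apply/andP; split; first by have := en_s [::] e s; rewrite cats0; apply.
  by apply/IH => t e' u s_eq; rewrite cat_rcons; apply: (en_s (e :: t)); rewrite s_eq.
- by case=> <- _; rewrite cats0.
- by case=> <- /en_s; rewrite cat_rcons.
Qed.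

Lemma enabledb_cat p s1 s2 :
  enabledb p (s1 ++ s2) = enabledb p s1 && enabledb (p ++ s1) s2.
Proof. by elim: s1 p => [|e s IH] p /=; rewrite ?cats0 // IH cat_rcons andbA. Qed.

Lemma enabledb_uo p w :
  all [predC obs] w -> enabledb p w = all (mem (S (proj obs p))) w.
Proof.
elim: w p => [|e w IH] p //= /andP[e_uo w_uo].
by rewrite IH // proj_rcons (negbTE e_uo).
Qed.

End Enabling.

Section Reach.
Variables (E : finType) (obs : {set E}) (T : Type) (d : T -> E -> option T).

Lemma UR_id gam q y : UR obs d gam (UR obs d gam q) y <-> UR obs d gam q y.
Proof.
split=> [[x [w [[x' [w' [qx' [w'_uo dw']]]] [w_uo dw]]]]|qy]; last by exists y, [::].
exists x', (w' ++ w); split=> //; split; last by rewrite dstar_cat dw'.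
by move: w'_uo w_uo; rewrite /uo_in all_cat => -> ->.
Qed.

Lemma UR_set0 q y : UR obs d set0 q y <-> q y.
Proof.
split=> [[x [[|e w] [qx [w_uo dw]]]]|qy]; last by exists y, [::].
  by case: dw => <-.
by move: w_uo; rewrite /uo_in /= in_set0 andbF.
Qed.

Lemma UR_NX_ext gam e q1 q2 y : (forall x, q1 x <-> q2 x) ->
  UR obs d gam (NX d e q1) y <-> UR obs d gam (NX d e q2) y.
Proof.
move=> q12; split=> -[x [w [[x1 [qx1 dx1]] uo_dw]]];
by exists x, w; split=> //; exists x1; split=> //; apply/q12.
Qed.
End Reach.

Section Estimate.
Variables (X E : finType) (obs : {set E}) (delta : X -> E -> option X).
Variables (X0 : {set X}) (S : seq E -> {set E}).

Local Notation Est := (Est obs delta X0 S).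
Local Notation UR := (UR obs delta).

Lemma inCLE x0 s :
  inCL obs delta S x0 s <-> dstar delta x0 s <> None /\ enabledb obs S [::] s.
Proof. by rewrite /inCL -enabledbP. Qed.

Lemma Est_nil y : Est [::] y <-> UR (S [::]) (fun x => x \in X0) y.
Proof.
split=> [[x0 [s [x0_X0 [/inCLE[_ en_s] [/eqP s_uo ds]]]]]|[x0 [w [x0_X0 [w_uo dw]]]]].
  rewrite proj_eq_nil in s_uo; rewrite enabledb_uo // in en_s.
  by exists x0, s; rewrite uo_inE s_uo.
move: w_uo; rewrite uo_inE => /andP[w_uo w_S].
exists x0, w; split; [done | split; last split=> //].
  by apply/inCLE; rewrite dw enabledb_uo.
by apply/eqP; rewrite proj_eq_nil.
Qed.

Lemma Est_rcons b a y : a \in obs ->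
  Est (rcons b a) y <-> a \in S b /\ UR (S (rcons b a)) (NX delta a (Est b)) y.
Proof.
move=> a_obs; have proj_a s w :
    all [predC obs] w -> proj obs (rcons s a ++ w) = rcons (proj obs s) a.
  by rewrite -proj_eq_nil proj_cat proj_rcons a_obs => /eqP ->; rewrite cats0.
split=> [[x0 [s [x0_X0 [/inCLE[_ en_s] [/proj_eq_rcons[s1 [w [s_eq <- w_uo]]] ds]]]]]|].
  move: en_s ds; rewrite {s}s_eq enabledb_cat /= => /and3P[en_s1 a_S].
  rewrite enabledb_uo // proj_rcons a_obs => w_S; rewrite dstar_cat /=.
  case ds1: (dstar delta x0 s1) => [x1|] //; case dx1: (delta x1 a) => [x2|] // dw.
  split=> //; exists x2, w; split; last by rewrite uo_inE w_uo.
  by exists x1; split=> //; exists x0, s1; split=> //; split=> //; apply/inCLE; rewrite ds1.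
case=> a_S [x [w [[x1 [[x0 [s1 [x0_X0 [/inCLE[_ en_s1] [pb ds1]]]]] dx1]] [w_uo dw]]]].
move: w_uo; rewrite uo_inE => /andP[w_uo w_S].
have ds : dstar delta x0 (rcons s1 a ++ w) = Some y.
  by rewrite -cats1 -catA dstar_cat ds1 /= dx1.
exists x0, (rcons s1 a ++ w); split=> //; split; last split=> //.
  apply/inCLE; rewrite ds enabledb_cat -cats1 enabledb_cat /= en_s1 pb a_S cats1.
  by rewrite enabledb_uo // proj_rcons a_obs pb.
by rewrite proj_a // pb.
Qed.

End Estimate.

Lemma tam_rcons (E : Type) (h : seq (MEv E)) a : tam (rcons h a) = tam h ++ tam [:: a].
Proof. by rewrite /tam -cats1 map_cat flatten_cat. Qed.

Section AttackRuns.
Variables (X E Z : finType) (obs : {set E}) (delta : X -> E -> option X).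
Variables (X0 : {set X}) (S : seq E -> {set E}) (xi : Z -> E -> option Z) (z0 : Z).
Hypothesis xi_uo : forall z e z', e \notin obs -> xi z e = Some z' -> z' = z.
Hypothesis realizes : forall x0 s, x0 \in X0 -> inCL obs delta S x0 s ->
  exists z, dstar xi z0 s = Some z /\ DeltaH xi z = S (proj obs s).

Local Notation Est := (Est obs delta X0 S).
Local Notation UR := (UR obs delta).

Lemma dstar_proj z s z' : dstar xi z s = Some z' -> dstar xi z (proj obs s) = Some z'.
Proof.
elim: s z => [|e s IH] z //=; rewrite /proj /=.
case xze: (xi z e) => [z1|] //; case: ifP => e_obs /=; first by rewrite xze; apply: IH.
by rewrite (xi_uo (negbT e_obs) xze); apply: IH.
Qed.

Lemma DeltaH_Est b x z : Est b x -> dstar xi z0 b = Some z -> DeltaH xi z = S b.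
Proof.
case=> x0 [s [x0_X0 [cl [<- _]]]] xi_z.
have [z' [xi_z' <-]] := realizes x0_X0 cl.
by move/dstar_proj: xi_z'; rewrite xi_z => -[->].
Qed.

Lemma Est_nil_DeltaH y : Est [::] y <-> UR (DeltaH xi z0) (fun x => x \in X0) y.
Proof.
have S_nil x0 : x0 \in X0 -> DeltaH xi z0 = S [::].
  move=> x0_X0; apply: (@DeltaH_Est _ x0) => //.
  by exists x0, [::]; split=> //; split; first by split=> // -[].
rewrite Est_nil; split=> ur; have [x0 [_ [x0_X0 _]]] := ur.
  by rewrite (S_nil x0).
by rewrite -(S_nil x0).
Qed.

Variable vuln : {set E}.
Hypothesis vuln_obs : vuln \subset obs.

Lemma Vset_obs e ea : e \in obs -> Vset vuln e (Some ea) -> ea \in obs.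
Proof.
rewrite /Vset; case: ifP => [_ _ /(subsetP vuln_obs) // | _ e_obs [->] //].
Qed.

Lemma Est_rcons_realized b q z ea z' :
  ea \in obs -> dstar xi z0 b = Some z -> xi z ea = Some z' ->
  (forall y, Est b y <-> UR (DeltaH xi z) q y) ->
  (exists x, qnext obs delta xi z q (Some ea) x) ->
  forall y, Est (rcons b ea) y <-> UR (DeltaH xi z') (qnext obs delta xi z q (Some ea)) y.
Proof.
move=> ea_obs xi_z xi_z' Est_q [x [x1 [/Est_q Est_x1 dx1]]].
have xi_z'_b : dstar xi z0 (rcons b ea) = Some z' by rewrite -cats1 dstar_cat xi_z /= xi_z'.
have ea_S : ea \in S b by rewrite -(DeltaH_Est Est_x1 xi_z) inE xi_z'.
have Est_x : Est (rcons b ea) x.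
  by apply/Est_rcons => //; split=> //; exists x, [::]; split=> //; exists x1.
move=> y; rewrite Est_rcons // -(DeltaH_Est Est_x xi_z'_b) /qnext /=.
by rewrite (UR_NX_ext _ _ _ _ _ Est_q); split=> [[]|].
Qed.

Definition tracks (hp : seq (MEv E)) (m : MState X Z E) : Prop :=
  match m with
  | Qe q _ zo => (forall z, zo = Some z -> dstar xi z0 (tam hp) = Some z) /\
      forall y, Est (tam hp) y <-> UR (DeltaHo xi zo) q y
  | Qa q _ z e => [/\ e \in obs, dstar xi z0 (tam hp) = Some z &
      forall y, Est (tam hp) y <-> UR (DeltaH xi z) q y]
  end.

Lemma tracks_q0 : tracks [::] (@q0M X E Z X0 z0).
Proof. by split=> [_ [<-] //|y]; apply: Est_nil_DeltaH. Qed.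

Lemma tracks_step hp m a m' :
  stepM obs vuln delta xi m a m' -> tracks hp m -> tracks (rcons hp a) m'.
Proof.
case=> [q qt z e [e_obs _] | q qt z e o Vo q'_empty | q qt z e _ _
       | q qt z e ea z' Vea q'_ne xi_z'] /=; rewrite tam_rcons /=.
- by rewrite cats0 => -[/(_ z erefl) xi_z Est_q]; split.
- case=> e_obs xi_z Est_q; split=> // y; rewrite UR_set0.
  split=> [Est_y|q'y]; case: q'_empty; last by exists y.
  case: o Vo Est_y => [ea Vea|_]; last by rewrite cats0 => /Est_q; exists y.
  rewrite cats1 Est_rcons ?(Vset_obs e_obs Vea) // => -[_ [x [_ [[x1 [Est_x1 dx1]] _]]]].
  by exists x, x1; split=> //; apply/Est_q.
- case=> _ xi_z Est_q; rewrite cats0; split=> [_ [<-] // | y].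
  by rewrite /qnext /= UR_id; apply: Est_q.
- case=> e_obs xi_z Est_q; have ea_obs := Vset_obs e_obs Vea; rewrite cats1.
  split=> [_ [<-] | ]; first by rewrite -cats1 dstar_cat xi_z /= xi_z'.
  exact: Est_rcons_realized ea_obs xi_z xi_z' Est_q q'_ne.
Qed.

Lemma tracks_run m h m' hp :
  runM obs vuln delta xi m h m' -> tracks hp m -> tracks (hp ++ h) m'.
Proof.
move=> run; elim: run hp => [m0|m0 a m1 h0 m2 step _ IH] hp tr; first by rewrite cats0.
by rewrite -cat_rcons; apply/IH/(tracks_step step).
Qed.

End AttackRuns.

Theorem proposition1 (X E Z : finType) (obs ctrl vuln : {set E})
  (delta : X -> E -> option X) (X0 : {set X})
  (xi : Z -> E -> option Z) (z0 : Z) (S : seq E -> {set E}) :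
  (* Sigma_v subset of Sigma_o *)
  vuln \subset obs ->
  (* S : P(L(G)) -> Gamma : uncontrollable events always enabled *)
  (forall x0 s e, x0 \in X0 -> inLG delta x0 s -> e \notin ctrl -> e \in S (proj obs s)) ->
  (* H changes state only on observable events *)
  (forall z e z', e \notin obs -> xi z e = Some z' -> z' = z) ->
  (* H realizes S *)
  (forall x0 s, x0 \in X0 -> inCL obs delta S x0 s ->
     exists z, dstar xi z0 s = Some z /\ DeltaH xi z = S (proj obs s)) ->
  forall h q qt zo,
    runM obs vuln delta xi (@q0M X E Z X0 z0) h (Qe q qt zo) ->
    forall x, Est obs delta X0 S (tam h) x <-> UR obs delta (DeltaHo xi zo) q x.
Proof.
move=> vuln_obs _ xi_uo realizes h q qt zo run.
exact: (tracks_run xi_uo realizes vuln_obs run (tracks_q0 xi_uo realizes)).2.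
Qed.
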